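(* Let $N\ge2$ and let $W:[0,\infty)\to(0,\infty)$ be such that $x\mapsto W(|x|)$ is in $C^2(\mathbb{R}^N)$, $W$ is non-decreasing and log-convex. Let $F\in C^2[0,+\infty)$ satisfy $F(0)=0<F(r)$ for $r>0$ and $$F''+\frac{W'}{W}F'+(N-1)\frac{F'}{r}=(N-1)\frac{F}{r^2}\quad\text{on }(0,+\infty).$$ Then for all $r>0$, $$\Big((F')^2+\frac{N-1}{r^2}F^2\Big)'\le0\qquad\text{and}\qquad\Big(\frac{N-1}{r}F^2+2FF'+\frac{W'}{W}F^2\Big)'\ge0.$$
   Context: This $F$ is the radial profile of the first nontrivial Steklov eigenfunctions $u_i(x)=\frac{x_i}{|x|}F(|x|)$, $i=1,\dots,N$, of $\nabla\cdot(W(|x|)\nabla u)=0$ in a ball centered at the origin with $\partial u/\partial\nu=\gamma u$ on its boundary. *)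

From HB Require Import structures.
From mathcomp Require Import all_boot all_order all_algebra.
From mathcomp Require Import all_classical all_reals all_analysis.
Set Implicit Arguments. Unset Strict Implicit. Unset Printing Implicit Defensive.
Import Order.TTheory GRing.Theory Num.Theory.
Import numFieldNormedType.Exports.
Local Open Scope classical_set_scope.
Local Open Scope ring_scope.

Definition eucl_norm (R : realType) (N : nat) (x : 'rV[R]_N) : R :=
  Num.sqrt (\sum_(i < N) x ord0 i ^+ 2).

Definition C2_Rn (R : realType) (N : nat) (f : 'rV[R]_N -> R) : Prop :=
  continuous f /\
  forall u v : 'rV[R]_N,
    (forall x, derivable f x u) /\
    (forall x, derivable ('D_u f) x v) /\
    continuous ('D_u f) /\ continuous ('D_v ('D_u f)).

(* F is of class C^2 on [0, +oo): twice differentiable on (0,+oo), with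
   F, F', F'' continuous on (0,+oo) and extending continuously to 0
   (F continuous from the right at 0, F' and F'' having right limits at 0),
   i.e. one-sided C^2 up to the boundary point 0. *)
Definition C2_nonneg (R : realType) (F : R -> R) : Prop :=
  (forall r, 0 < r -> derivable F r 1 /\ derivable (derive1 F) r 1) /\
  {in `]0, +oo[, continuous (derive1n 2 F)} /\
  F @ at_right 0 --> F 0 /\
  cvg (derive1 F @ at_right 0) /\
  cvg (derive1n 2 F @ at_right 0).

Definition nondecr_nonneg (R : realType) (W : R -> R) : Prop :=
  forall x y : R, 0 <= x -> x <= y -> W x <= W y.

Definition logconvex_nonneg (R : realType) (W : R -> R) : Prop :=
  forall x y t : R, 0 <= x -> 0 <= y -> 0 <= t <= 1 ->
    ln (W (t * x + (1 - t) * y)) <= t * ln (W x) + (1 - t) * ln (W y).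

(* The first quantity is an energy for the ODE: substituting F'' from the
   equation, its derivative is -2 (W'/W) F'^2 - 2 (N-1)/r (F' - F/r)^2, which
   is non-positive because W is non-decreasing.  Likewise the derivative of
   the second one is (N-1) F^2/r^2 + 2 F'^2 + (W'/W)' F^2, and (W'/W)' >= 0
   because W'/W is the derivative of the convex function ln W.  That W is
   twice differentiable on (0, +oo) is read off the C^2 regularity of
   x |-> W(|x|) along a coordinate ray. *)

From HB Require Import structures.
From mathcomp Require Import all_boot all_order all_algebra.
From mathcomp Require Import all_classical all_reals all_analysis.
From mathcomp Require Import ring lra.
Import Order.TTheory GRing.Theory Num.Theory.
Import numFieldNormedType.Exports.
Local Open Scope classical_set_scope.
Local Open Scope ring_scope.

Set Implicit Arguments.
Unset Strict Implicit.
Unset Printing Implicit Defensive.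

Lemma is_derive_ray (R : numFieldType) (V W : normedModType R)
    (f : V -> W) (e : V) (a : R) :
  derivable f (a *: e) e ->
  is_derive a 1 (fun s => f (s *: e)) ('D_e f (a *: e)).
Proof.
have quotE : (fun h : R => h^-1 *: (((fun s => f (s *: e)) \o shift a) (h *: 1)
                                     - f (a *: e)))
    = (fun h => h^-1 *: ((f \o shift (a *: e)) (h *: e) - f (a *: e))).
  by apply/funext => h /=; rewrite scalerDl -[h *: 1]/(h * 1) mulr1.
by move=> df; apply: DeriveDef; rewrite /derivable /derive quotE.
Qed.

Lemma eucl_norm_scale_delta (R : realType) N (j : 'I_N) (s : R) :
  eucl_norm (s *: 'e_j) = `|s|.
Proof.
rewrite /eucl_norm (bigD1 j) //= big1 => [|i /negbTE ij].
  by rewrite !mxE !eqxx mulr1 addr0 sqrtr_sqr.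
by rewrite !mxE ij andbF mulr0 expr0n.
Qed.

Section derive1_sign.
Context {R : realType}.
Implicit Types (f : R -> R) (x : R).

Lemma derivable_is_derive1 f x :
  derivable f x 1 -> is_derive x 1 f (derive1 f x).
Proof. by rewrite derive1E; exact: derivableP. Qed.

Lemma derive1_cvg f x : derivable f x 1 ->
  h^-1 * (f (h + x) - f x) @[h --> 0^'] --> derive1 f x.
Proof.
rewrite /derivable /derive1 /=.
by under [X in cvg (X @ _)]eq_fun do rewrite -[_ *: 1]/(_ * 1) mulr1.
Qed.

Lemma derive1_ge0_of_le_right f x : derivable f x 1 ->
  (forall y, x < y -> f x <= f y) -> 0 <= derive1 f x.
Proof.
move=> /derive1_cvg/cvg_dnbhs_at_right q fx_min.
rewrite -(cvg_lim _ q) //; apply: limr_ge; first exact: cvgP q.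
near=> h; have h_gt0 : 0 < h by near: h; exact: nbhs_right_gt.
apply: mulr_ge0; first by rewrite invr_ge0 ltW.
by rewrite subr_ge0 fx_min // ltrDr.
Unshelve. all: end_near. Qed.

End derive1_sign.

Section convex_slopes.
Context {R : realType} (phi : R -> R) (x y : R).
Hypothesis convex_xy : forall t, 0 <= t <= 1 ->
  phi (t * x + (1 - t) * y) <= t * phi x + (1 - t) * phi y.

Lemma convex_le_chord z : x < y -> x <= z <= y ->
  phi z <= phi x + (z - x) * ((phi y - phi x) / (y - x)).
Proof.
move=> x_lt_y /andP[xz zy]; have yx_gt0 : 0 < y - x by lra.
have t01 : 0 <= (y - z) / (y - x) <= 1.
  by apply/andP; split; [apply: divr_ge0 | rewrite ler_pdivrMr // mul1r]; lra.
by have := convex_xy t01; congr (phi _ <= _); field; lra.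
Qed.

Lemma derive1_le_slope : x < y -> derivable phi x 1 ->
  derive1 phi x <= (phi y - phi x) / (y - x).
Proof.
move=> x_lt_y /derive1_cvg/cvg_dnbhs_at_right q.
rewrite -(cvg_lim _ q) //; apply: limr_le; first exact: cvgP q.
near=> h; have h_gt0 : 0 < h by near: h; exact: nbhs_right_gt.
have h_lt : h < y - x by near: h; apply: nbhs_right_lt; lra.
have := @convex_le_chord (h + x) x_lt_y; rewrite addrK => /(_ ltac:(lra)) chord.
by rewrite ler_pdivrMl //; lra.
Unshelve. all: end_near. Qed.

Lemma slope_le_derive1 : x < y -> derivable phi y 1 ->
  (phi y - phi x) / (y - x) <= derive1 phi y.
Proof.
move=> x_lt_y /derive1_cvg/cvg_dnbhs_at_left q.
rewrite -(cvg_lim _ q) //; apply: limr_ge; first exact: cvgP q.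
near=> h; have h_lt0 : h < 0 by near: h; exact: nbhs_left_lt.
have h_gt : x - y < h by near: h; apply: nbhs_left_gt; lra.
have := @convex_le_chord (h + y) x_lt_y => /(_ ltac:(lra)) chord.
have slopeE : (y - x) * ((phi y - phi x) / (y - x)) = phi y - phi x.
  by field; lra.
by rewrite ler_ndivlMl //; lra.
Unshelve. all: end_near. Qed.

Lemma convex_derive1_le : x < y -> derivable phi x 1 -> derivable phi y 1 ->
  derive1 phi x <= derive1 phi y.
Proof.
move=> x_lt_y dx dy.
exact: le_trans (derive1_le_slope x_lt_y dx) (slope_le_derive1 x_lt_y dy).
Qed.

End convex_slopes.

Section radial_profile.
Context {R : realType} {N : nat} (g : R -> R).
Let f (x : 'rV[R]_N) := g (eucl_norm x).

Lemma is_derive_radial (j : 'I_N) s : 0 < s ->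
  derivable f (s *: 'e_j) 'e_j -> is_derive s 1 g ('D_('e_j) f (s *: 'e_j)).
Proof.
move=> s_gt0 /is_derive_ray; apply: near_eq_is_derive.
near=> t; rewrite /f eucl_norm_scale_delta gtr0_norm //.
by near: t; exact: lt_nbhsr.
Unshelve. all: end_near. Qed.

Lemma C2_radial_derivable : (0 < N)%N -> C2_Rn f ->
  forall s, 0 < s -> derivable g s 1 /\ derivable (derive1 g) s 1.
Proof.
move=> N_gt0 [_ f_C2] s s_gt0; pose j : 'I_N := Ordinal N_gt0.
have [df_e [dDf_e _]] := f_C2 'e_j 'e_j.
split; first by case: (is_derive_radial (j := j) s_gt0 (df_e _)).
have [dDf_ray _] := is_derive_ray (dDf_e (s *: 'e_j)).
apply: (near_eq_derivable _ dDf_ray).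
near=> t; have t_gt0 : 0 < t by near: t; exact: lt_nbhsr.
by rewrite derive1E; case: (is_derive_radial (j := j) t_gt0 (df_e _)) => _ ->.
Unshelve. all: end_near. Qed.

End radial_profile.

Lemma logconvex_derive1_ratio_le (R : realType) (W : R -> R) :
  (forall r, 0 <= r -> 0 < W r) -> logconvex_nonneg W ->
  (forall s, 0 < s -> derivable W s 1) ->
  forall x y, 0 < x -> x <= y -> derive1 W x / W x <= derive1 W y / W y.
Proof.
move=> W_gt0 W_logconvex dW x y x_gt0.
rewrite le_eqVlt => /predU1P[-> //|x_lt_y].
have y_gt0 : 0 < y by exact: lt_trans x_lt_y.
have dlnW (s : R) :
    0 < s -> is_derive s 1 (fun t => ln (W t)) (derive1 W s / W s).
  move=> s_gt0; rewrite mulrC.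
  exact: is_derive1_comp (is_derive1_ln (W_gt0 s (ltW s_gt0)))
                         (derivable_is_derive1 (dW s s_gt0)).
have lnWE (s : R) : 0 < s -> derive1 W s / W s = derive1 (fun t => ln (W t)) s.
  by move=> s_gt0; rewrite [RHS]derive1E; case: (dlnW s s_gt0) => _ ->.
rewrite lnWE // lnWE //; apply: convex_derive1_le x_lt_y _ _.
- by move=> t; apply: W_logconvex; exact: ltW.
- by case: (dlnW x x_gt0).
- by case: (dlnW y y_gt0).
Qed.

Section radial_energies.
Context {R : realType} (n : R) (F A : R -> R) (r : R).
Hypotheses (n_ge0 : 0 <= n) (r_gt0 : 0 < r).
Hypotheses (dF : derivable F r 1) (dF' : derivable (derive1 F) r 1).
Hypothesis ode : derive1 (derive1 F) r + A r * derive1 F r + n * derive1 F r / r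
  = n * F r / r ^+ 2.

Let F''E : derive1 (derive1 F) r
  = n * F r / r ^+ 2 - A r * derive1 F r - n * derive1 F r / r.
Proof. by move: ode; lra. Qed.

Lemma derive1_energyE :
  derive1 (fun s => derive1 F s ^+ 2 + n / s ^+ 2 * F s ^+ 2) r
  = - 2 * A r * derive1 F r ^+ 2 - 2 * n / r * (derive1 F r - F r / r) ^+ 2.
Proof.
have hF := derivable_is_derive1 dF; have hF' := derivable_is_derive1 dF'.
have r2_neq0 : r ^+ 2 != 0 by rewrite expf_neq0 // gt_eqF.
(* Instance resolution of [is_derive] assembles the derivative from the facts
   above; unfolding the scaling of R over itself then turns [*:] into [*]. *)
rewrite derive1E; apply: derive_val; apply: is_derive_eq.
rewrite /GRing.scale /=.
by rewrite F''E; field; rewrite gt_eqF.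
Qed.

Lemma derive1_fluxE : derivable A r 1 ->
  derive1 (fun s => n / s * F s ^+ 2 + 2 * F s * derive1 F s + A s * F s ^+ 2) r
  = n * (F r / r) ^+ 2 + 2 * derive1 F r ^+ 2 + derive1 A r * F r ^+ 2.
Proof.
move=> dA; have hA := derivable_is_derive1 dA.
have hF := derivable_is_derive1 dF; have hF' := derivable_is_derive1 dF'.
have r_neq0 : r != 0 by rewrite gt_eqF.
have hV : is_derive r 1 (fun s : R => s^-1) (- r ^- 2).
  apply: is_derive_eq (is_deriveV r_neq0 (is_derive_id r 1)) _.
  by rewrite scaler1.
rewrite derive1E; apply: derive_val; apply: is_derive_eq.
rewrite /GRing.scale /=.
by rewrite F''E; field.
Qed.

Lemma derive1_energy_le0 : 0 <= A r ->
  derive1 (fun s => derive1 F s ^+ 2 + n / s ^+ 2 * F s ^+ 2) r <= 0.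
Proof.
move=> A_ge0; rewrite derive1_energyE.
have := mulr_ge0 A_ge0 (sqr_ge0 (derive1 F r)).
have := mulr_ge0 (divr_ge0 n_ge0 (ltW r_gt0)) (sqr_ge0 (derive1 F r - F r / r)).
lra.
Qed.

Lemma derive1_flux_ge0 : derivable A r 1 -> 0 <= derive1 A r ->
  0 <= derive1 (fun s => n / s * F s ^+ 2 + 2 * F s * derive1 F s
                         + A s * F s ^+ 2) r.
Proof.
move=> dA A'_ge0; rewrite derive1_fluxE //.
have := mulr_ge0 n_ge0 (sqr_ge0 (F r / r)).
have := mulr_ge0 A'_ge0 (sqr_ge0 (F r)).
have := sqr_ge0 (derive1 F r).
lra.
Qed.

End radial_energies.

Theorem lemma3p3 (R : realType) (N : nat) (W F : R -> R) :
  (2 <= N)%N ->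
  (forall r, 0 <= r -> 0 < W r) ->
  C2_Rn (fun x : 'rV[R]_N => W (eucl_norm x)) ->
  nondecr_nonneg W ->
  logconvex_nonneg W ->
  C2_nonneg F ->
  F 0 = 0 ->
  (forall r, 0 < r -> 0 < F r) ->
  (forall r, 0 < r ->
     derive1n 2 F r + derive1 W r / W r * derive1 F r + (N - 1)%:R * derive1 F r / r
     = (N - 1)%:R * F r / r ^+ 2) ->
  forall r, 0 < r ->
    derive1 (fun s => derive1 F s ^+ 2 + (N - 1)%:R / s ^+ 2 * F s ^+ 2) r
      <= 0 /\
    0 <= derive1 (fun s => (N - 1)%:R / s * F s ^+ 2
                            + 2 * F s * derive1 F s
                            + derive1 W s / W s * F s ^+ 2) r.
Proof.
move=> N_ge2 W_gt0 W_C2 W_nondecr W_logconvex [dF _] _ _ ode r r_gt0.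
have W_derivable := C2_radial_derivable (ltnW N_ge2) W_C2.
have dW s : 0 < s -> derivable W s 1 by move=> /W_derivable[].
pose A s := derive1 W s / W s.
have dA : derivable A r 1.
  have hW := derivable_is_derive1 (dW r r_gt0).
  have hW' := derivable_is_derive1 (W_derivable r r_gt0).2.
  have Wr_neq0 : W r != 0 by rewrite gt_eqF // W_gt0 // ltW.
  by apply: ex_derive.
have A_ge0 : 0 <= A r.
  apply: divr_ge0; last exact/ltW/W_gt0/ltW.
  apply: derive1_ge0_of_le_right (dW r r_gt0) _ => y /ltW.
  by apply: W_nondecr; exact: ltW.
have A'_ge0 : 0 <= derive1 A r.
  apply: derive1_ge0_of_le_right dA _ => y /ltW r_le_y.
  exact: (logconvex_derive1_ratio_le W_gt0 W_logconvex dW r_gt0 r_le_y).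
have n_ge0 : 0 <= (N - 1)%:R :> R by exact: ler0n.
have [dF_r dF'_r] := dF r r_gt0.
split.
- exact: derive1_energy_le0 n_ge0 r_gt0 dF_r dF'_r (ode r r_gt0) A_ge0.
- exact: derive1_flux_ge0 n_ge0 r_gt0 dF_r dF'_r (ode r r_gt0) dA A'_ge0.
Qed.
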